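(* Let $R$ be a finite commutative ring with identity and let $\mathfrak{m}$ be a maximal ideal of $R$ of maximum size among all maximal ideals. If $R/\mathfrak{m}$ has characteristic $2$, then $$\chi\big(\mathrm{Reg}(\Gamma(R))\big)=\omega\big(\mathrm{Reg}(\Gamma(R))\big)=\frac{|\mathrm{Reg}(R)|}{|R/\mathfrak{m}|-1}.$$
   Context: $Z(R)$ is the set of zero-divisors of $R$ (including $0$) and $\mathrm{Reg}(R)=R\setminus Z(R)$ is the set of regular elements. The total graph $T(\Gamma(R))$ is the simple graph with vertex set $R$ in which distinct $x,y$ are adjacent iff $x+y\in Z(R)$; $\mathrm{Reg}(\Gamma(R))$ is its induced subgraph on $\mathrm{Reg}(R)$. $\chi$ and $\omega$ denote chromatic and clique number. *)

From mathcomp Require Import all_boot all_order all_algebra.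
Set Implicit Arguments. Unset Strict Implicit. Unset Printing Implicit Defensive.
Import GRing.Theory.
Local Open Scope ring_scope.

Section Defs.
Variable R : finComNzRingType.

Definition is_ideal (I : {set R}) : Prop :=
  [/\ (0 : R) \in I,
      (forall x y, x \in I -> y \in I -> x + y \in I) &
      (forall r x, x \in I -> r * x \in I)].

Definition is_maximal_ideal (M : {set R}) : Prop :=
  [/\ is_ideal M, (1 : R) \notin M &
      forall J : {set R}, is_ideal J -> M \subset J -> J = M \/ (1 : R) \in J].

(* the quotient R/M, realized as the set of cosets x + M *)
Definition quot_cosets (M : {set R}) : {set {set R}} :=
  [set [set x + y | y in M] | x : R].

(* characteristic of R/M is p: p is the least positive n with n*1 = 0 in R/M,
   i.e. n%:R \in M *)
Definition quot_char (M : {set R}) (p : nat) : Prop :=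
  (0 < p)%N /\ (p%:R : R) \in M /\ forall n, (0 < n)%N -> (n%:R : R) \in M -> (p <= n)%N.

(* zero-divisors, including 0 *)
Definition zero_divisors : {set R} := [set x | [exists y : R, (y != 0) && (x * y == 0)]].
Definition regulars : {set R} := ~: zero_divisors.

(* Reg(Gamma(R)): vertex set regulars, x ~ y iff x != y and x + y in Z(R) *)
Definition reg_adj (x y : R) : bool := (x != y) && (x + y \in zero_divisors).

Definition proper_coloring (k : nat) (c : R -> nat) : Prop :=
  (forall x, x \in regulars -> (c x < k)%N) /\
  (forall x y, x \in regulars -> y \in regulars -> reg_adj x y -> c x != c y).

Definition colorable (k : nat) : Prop := exists c, proper_coloring k c.

Definition is_chromatic_number (n : nat) : Prop :=
  colorable n /\ forall k, colorable k -> (n <= k)%N.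

Definition is_clique (S : {set R}) : Prop :=
  S \subset regulars /\ forall x y, x \in S -> y \in S -> x != y -> reg_adj x y.

Definition is_clique_number (n : nat) : Prop :=
  (exists S, is_clique S /\ #|S| = n) /\ forall S, is_clique S -> (#|S| <= n)%N.

End Defs.

From mathcomp Require Import all_boot all_order all_algebra.
From mathcomp Require Import ring.
Set Implicit Arguments. Unset Strict Implicit. Unset Printing Implicit Defensive.
Import GRing.Theory.
Local Open Scope ring_scope.

(* Let q = |R/m| and let K be the set of units congruent to 1 modulo m; in a
   finite ring the regular elements are exactly the units.  Since 2 \in m, the
   sum of two elements of K lies in m, so K is a clique.  Conversely, for every
   nonzero residue a of R/m the Chinese remainder theorem gives a unit h(a)
   with h(a) = a mod m, h(a) = 1 mod every maximal N with 2 \notin N, and, at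
   the maximal N with 2 \in N, pairwise distinct nonzero values; the latter
   exist because |N| <= |m| forces |R/N| >= q.  Then h(a) + h(b) is a unit for
   a <> b, every unit is uniquely h(a) k with k in K, and colouring h(a) k by k
   is proper.  Hence chi = omega = |K| = |Reg(R)| / (q - 1). *)

Section SetEmbedding.
Variable T : finType.
Implicit Types (A B : {set T}) (x : T).

Definition set_embed A B x : T := nth x (enum B) (index x (enum A)).

Lemma set_embed_id A : {in A, set_embed A A =1 id}.
Proof. by move=> x xA; rewrite /set_embed nth_index ?mem_enum. Qed.

Section Leq.
Variables A B : {set T}.
Hypothesis leAB : (#|A| <= #|B|)%N.

Let index_lt x : x \in A -> (index x (enum A) < size (enum B))%N.
Proof. by move=> xA; rewrite -cardE (leq_trans _ leAB) // cardE index_mem mem_enum. Qed.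

Lemma set_embed_mem x : x \in A -> set_embed A B x \in B.
Proof. by move=> xA; rewrite -mem_enum mem_nth ?index_lt. Qed.

Lemma set_embed_inj : {in A &, injective (set_embed A B)}.
Proof.
move=> x y xA yA; rewrite /set_embed (set_nth_default x _ (index_lt yA)) => /eqP.
rewrite nth_uniq ?index_lt ?enum_uniq //.
by move/eqP/(index_inj x); apply; rewrite mem_enum.
Qed.

End Leq.
End SetEmbedding.

Section Regular.
Variable R : finComNzRingType.
Implicit Types x y : R.

Lemma zero_divisorsE x : (x \in zero_divisors R) = (x \notin regulars R).
Proof. by rewrite in_setC negbK. Qed.

Lemma regularP x : reflect (exists y, x * y = 1) (x \in regulars R).
Proof.
rewrite in_setC inE; apply: (iffP idP) => [/existsPn x_reg|[y xy1]].
  have x_inj : injective ( *%R x).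
    move=> y z /eqP; rewrite -subr_eq0 -mulrBr => /eqP xyz0; apply/eqP.
    by rewrite -subr_eq0; apply: contraTT (x_reg (y - z)) => ->; rewrite xyz0 eqxx.
  by have [g _ gK] := injF_bij x_inj; exists (g 1); apply: gK.
apply/existsPn => z; apply/negP => /andP[/negP + /eqP xz0]; apply; apply/eqP.
by rewrite -[z]mul1r -xy1 mulrAC xz0 mul0r.
Qed.

Definition reg_inv x : R := odflt 0 [pick y | x * y == 1].

Lemma mulr_reg_inv x : x \in regulars R -> x * reg_inv x = 1.
Proof.
move/regularP=> [y xy1]; rewrite /reg_inv; case: pickP => [z /eqP //|/(_ y)].
by rewrite xy1 eqxx.
Qed.

Lemma regularM x y : x \in regulars R -> y \in regulars R -> x * y \in regulars R.
Proof.
move=> /regularP[x' xx'] /regularP[y' yy']; apply/regularP; exists (x' * y').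
by rewrite mulrACA xx' yy' mulr1.
Qed.

Lemma reg_inv_regular x : x \in regulars R -> reg_inv x \in regulars R.
Proof. by move=> x_reg; apply/regularP; exists x; rewrite mulrC mulr_reg_inv. Qed.

End Regular.

Section Ideals.
Variable R : finComNzRingType.
Implicit Types (x y z r : R) (I J M N : {set R}).

Section Closure.
Variables (I : {set R}) (I_ideal : is_ideal I).

Lemma ideal0 : 0 \in I. Proof. by case: I_ideal. Qed.

Lemma idealD x y : x \in I -> y \in I -> x + y \in I.
Proof. by case: I_ideal => _ + _; apply. Qed.

Lemma idealMl r x : x \in I -> r * x \in I.
Proof. by case: I_ideal => _ _; apply. Qed.

Lemma idealMr r x : x \in I -> x * r \in I.
Proof. by rewrite mulrC; apply: idealMl. Qed.

Lemma idealN x : x \in I -> - x \in I.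
Proof. by rewrite -mulN1r; apply: idealMl. Qed.

Lemma idealB x y : x \in I -> y \in I -> x - y \in I.
Proof. by move=> xI /idealN; apply: idealD. Qed.

Lemma idealDr x y : y \in I -> (x + y \in I) = (x \in I).
Proof.
move=> yI; apply/idP/idP => [xyI|xI]; last exact: idealD.
by rewrite -(addrK y x) idealB.
Qed.

Lemma idealBC x y : (x - y \in I) = (y - x \in I).
Proof. by apply/idP/idP => /idealN; rewrite opprB. Qed.

Lemma ideal_char2_addr x y :
  2%:R \in I -> x - y \notin I -> x + y \notin I.
Proof.
move=> I2; have -> : x + y = x - y + 2%:R * y by ring.
by rewrite (idealDr (x - y)) //; apply: idealMr.
Qed.

End Closure.

Definition idealb I : bool :=
  [&& 0 \in I, [forall x in I, forall y in I, x + y \in I]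
    & [forall r, forall x in I, r * x \in I]].

Lemma idealP I : reflect (is_ideal I) (idealb I).
Proof.
apply: (iffP and3P) => [[I0 /forall_inP ID /forallP IM]|[I0 ID IM]].
  split=> // [x y /ID ID_x|r]; first by move/forall_inP: ID_x; apply.
  by move/forall_inP: (IM r).
split=> //; last by apply/forallP => r; apply/forall_inP => x xI; apply: IM.
by apply/forall_inP => x xI; apply/forall_inP => y yI; apply: ID.
Qed.

Definition maximalb M : bool :=
  [&& idealb M, 1 \notin M
    & [forall J : {set R}, idealb J ==> (M \subset J) ==> (J == M) || (1 \in J)]].

Lemma maximalP M : reflect (is_maximal_ideal M) (maximalb M).
Proof.
apply: (iffP and3P) => [[/idealP MI M1 /forallP Mmax]|[MI M1 Mmax]].
  split=> // J /idealP JI MJ.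
  by have /implyP/(_ JI)/implyP/(_ MJ)/orP[/eqP|] := Mmax J; [left|right].
split=> //; first exact/idealP.
apply/forallP => J; apply/implyP => /idealP JI; apply/implyP => /(Mmax J JI).
by case=> ->; rewrite ?eqxx ?orbT.
Qed.

Lemma maximal_ideal_exists x :
  x \notin regulars R -> exists2 M, is_maximal_ideal M & x \in M.
Proof.
move=> x_nreg; pose xR := [set x * r | r : R].
have xR_ideal : idealb xR.
  apply/idealP; split.
  - by apply/imsetP; exists 0; rewrite ?mulr0.
  - move=> _ _ /imsetP[r _ ->] /imsetP[s _ ->].
    by apply/imsetP; exists (r + s); rewrite ?mulrDr.
  - by move=> t _ /imsetP[r _ ->]; apply/imsetP; exists (t * r) => //; rewrite mulrCA.
have xR1 : 1 \notin xR.
  by apply: contra x_nreg => /imsetP[r _ xr1]; apply/regularP; exists r.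
have x_xR : x \in xR by apply/imsetP; exists 1; rewrite ?mulr1.
pose proper_over_x J := [&& idealb J, 1 \notin J & x \in J].
have [|M /and3P[/idealP MI M1 xM] Mmax] :=
  @arg_maxnP _ xR proper_over_x (fun J => #|J|); first exact/and3P.
exists M => //; split=> // J JI MJ; case J1: (1 \in J); [by right|left].
apply/eqP; rewrite eq_sym eqEcard MJ; apply: Mmax.
by apply/and3P; split; [apply/idealP | rewrite J1 | apply: (subsetP MJ)].
Qed.

Lemma maximal_nonregular M x : is_maximal_ideal M -> x \in M -> x \notin regulars R.
Proof.
case=> MI M1 _ xM; apply: contra M1 => /regularP[y <-].
exact: idealMr.
Qed.

Lemma regular_maximalP x :
  reflect (forall M, is_maximal_ideal M -> x \notin M) (x \in regulars R).
Proof.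
apply: (iffP idP) => [x_reg M Mmax|x_notin].
  by apply: contraL x_reg; apply: maximal_nonregular.
apply: contraT => /maximal_ideal_exists[M Mmax xM].
by have := x_notin M Mmax; rewrite xM.
Qed.

Lemma maximal_comaximal M N : is_maximal_ideal M -> is_maximal_ideal N -> M != N ->
  exists2 b, b \in N & 1 - b \in M.
Proof.
move=> [MI M1 Mmax] [NI N1 Nmax] MN.
pose MN_sum := [set a + b | a in M, b in N].
have sum_ideal : is_ideal MN_sum.
  split.
  - by apply/imset2P; exists 0 0; rewrite ?addr0 ?ideal0.
  - move=> _ _ /imset2P[a b aM bN ->] /imset2P[a' b' aM' bN' ->].
    by apply/imset2P; exists (a + a') (b + b'); [exact: idealD|exact: idealD|rewrite addrACA].
  - move=> r _ /imset2P[a b aM bN ->].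
    by apply/imset2P; exists (r * a) (r * b); [exact: idealMl|exact: idealMl|rewrite mulrDr].
have M_sum : M \subset MN_sum.
  by apply/subsetP => a aM; apply/imset2P; exists a 0; rewrite ?addr0 ?ideal0.
case: (Mmax _ sum_ideal M_sum) => [sumM|/imset2P[a b aM bN ab1]]; last first.
  by exists b; rewrite // ab1 addrK.
have N_M : N \subset M.
  by rewrite -sumM; apply/subsetP => b bN; apply/imset2P; exists 0 b; rewrite ?add0r ?ideal0.
by case: (Nmax _ MI N_M) => [NM|M1']; [rewrite NM eqxx in MN|rewrite M1' in M1].
Qed.

End Ideals.

Section ChineseRemainder.
Variable R : finComNzRingType.
Implicit Types (x : R) (M N : {set R}) (c d : {set R} -> R).

Definition comax_elt M N : R := odflt 0 [pick b | (b \in N) && (1 - b \in M)].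

Lemma comax_eltP M N : is_maximal_ideal M -> is_maximal_ideal N -> M != N ->
  comax_elt M N \in N /\ 1 - comax_elt M N \in M.
Proof.
move=> Mmax Nmax MN; have [b bN b1M] := maximal_comaximal Mmax Nmax MN.
by rewrite /comax_elt; case: pickP => [b' /andP[]|/(_ b)] //; rewrite bN b1M.
Qed.

Definition crt_basis M : R := \prod_(N | maximalb N && (N != M)) comax_elt M N.

Lemma crt_basis_sub1 M : is_maximal_ideal M -> crt_basis M - 1 \in M.
Proof.
move=> Mmax; have [MI _ _] := Mmax.
apply: (big_ind (fun x => x - 1 \in M)); first by rewrite subrr ideal0.
  move=> x y x1 y1; have -> : x * y - 1 = (x - 1) * y + (y - 1) by ring.
  by apply: idealD => //; apply: idealMr.
move=> N /andP[/maximalP Nmax]; rewrite eq_sym => MN.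
have [_ b1M] := comax_eltP Mmax Nmax MN.
by rewrite -opprB idealN.
Qed.

Lemma crt_basis_mem M N : is_maximal_ideal M -> is_maximal_ideal N -> N != M ->
  crt_basis M \in N.
Proof.
move=> Mmax Nmax; rewrite eq_sym => MN; have [NI _ _] := Nmax.
rewrite /crt_basis (bigD1 N) /=; last by rewrite eq_sym MN andbT; apply/maximalP.
by apply: idealMr => //; case: (comax_eltP Mmax Nmax MN).
Qed.

Definition crt_lift c : R := \sum_(M | maximalb M) c M * crt_basis M.

Lemma crt_liftP c N : is_maximal_ideal N -> crt_lift c - c N \in N.
Proof.
move=> Nmax; have [NI _ _] := Nmax.
rewrite /crt_lift (bigD1 N) /=; last exact/maximalP.
rewrite addrAC; apply: idealD => //.
  by rewrite -{2}[c N]mulr1 -mulrBr idealMl // crt_basis_sub1.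
apply: (big_ind (fun x => x \in N)) => [|x y|M /andP[/maximalP Mmax MN]].
- exact: ideal0.
- exact: idealD.
- by apply: idealMl => //; apply: crt_basis_mem; rewrite // eq_sym.
Qed.

Lemma crt_liftD c d : crt_lift (fun M => c M + d M) = crt_lift c + crt_lift d.
Proof. by rewrite /crt_lift -big_split; apply: eq_bigr => M _; rewrite mulrDl. Qed.

Lemma crt_lift_regular c :
  (forall N, is_maximal_ideal N -> c N \notin N) -> crt_lift c \in regulars R.
Proof.
move=> cN; apply/regular_maximalP => N Nmax; have [NI _ _] := Nmax.
apply: contra (cN N Nmax) => liftN.
by rewrite -(subKr (crt_lift c) (c N)) idealB ?crt_liftP.
Qed.

End ChineseRemainder.

Section Residues.
Variables (R : finComNzRingType) (M : {set R}).
Hypothesis M_ideal : is_ideal M.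
Implicit Types x y z : R.

Definition add_coset x : {set R} := [set x + y | y in M].

Lemma mem_add_coset x z : (z \in add_coset x) = (z - x \in M).
Proof.
apply/imsetP/idP => [[y yM ->]|zxM]; first by rewrite [x + y]addrC addrK.
by exists (z - x); rewrite // addrC subrK.
Qed.

Lemma add_coset_id x : x \in add_coset x.
Proof. by rewrite mem_add_coset subrr ideal0. Qed.

Lemma add_coset_eq x y : x - y \in M -> add_coset x = add_coset y.
Proof.
move=> xyM; apply/setP => z; rewrite !mem_add_coset.
have -> : z - y = z - x + (x - y) by ring.
by rewrite (idealDr M_ideal _ xyM).
Qed.

Lemma quot_cosets_partition : partition (quot_cosets M) [set: R].
Proof.
have -> : quot_cosets M = equivalence_partition (fun x z => z - x \in M) [set: R].
  apply/setP => C; apply/imsetP/imsetP => -[x _ ->]; exists x => //;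
    by apply/setP => z; rewrite inE /= in_setT -mem_add_coset.
apply: equivalence_partitionP => x y z _ _ _; split; first by rewrite subrr ideal0.
move=> yxM; have -> : z - x = z - y + (y - x) by ring.
by rewrite (idealDr M_ideal _ yxM).
Qed.

Lemma card_quot_cosets : #|R| = (#|quot_cosets M| * #|M|)%N.
Proof.
rewrite -cardsT (card_uniform_partition (n := #|M|) _ quot_cosets_partition) //.
by move=> _ /imsetP[x _ ->]; rewrite card_imset //; apply: addrI.
Qed.

Lemma ideal_in_quot_cosets : M \in quot_cosets M.
Proof.
apply/imsetP; exists 0 => //; apply/setP => z.
by rewrite mem_add_coset subr0.
Qed.

Local Notation nonzero_cosets := (quot_cosets M :\ M).

Definition residues : {set R} := transversal nonzero_cosets (~: M).

Let nonzero_cosets_partition : partition nonzero_cosets (~: M).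
Proof. by rewrite -setTD partitionD1 ?quot_cosets_partition ?ideal_in_quot_cosets. Qed.

Let residues_transversal : is_transversal residues nonzero_cosets (~: M).
Proof. exact: transversalP. Qed.

Lemma add_coset_nonzero x : x \notin M -> add_coset x \in nonzero_cosets.
Proof.
move=> xM; rewrite !inE andbC; apply/andP; split; first exact: imset_f.
by apply: contraNneq xM => <-; apply: add_coset_id.
Qed.

Let pblock_residue x : x \notin M -> pblock nonzero_cosets x = add_coset x.
Proof.
move=> xM; apply: def_pblock (add_coset_nonzero xM) (add_coset_id x).
exact: partition_trivIset nonzero_cosets_partition.
Qed.

Lemma residues_notin a : a \in residues -> a \notin M.
Proof. by move/(subsetP (transversal_sub residues_transversal)); rewrite inE. Qed.

Lemma residues_inj a b : a \in residues -> b \in residues -> a - b \in M -> a = b.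
Proof.
move=> aX bX abM; apply: (pblock_inj residues_transversal) => //.
by rewrite !pblock_residue ?residues_notin // (add_coset_eq abM).
Qed.

Lemma residues_cover x : x \notin M -> exists2 a, a \in residues & x - a \in M.
Proof.
move=> xM; have xP := add_coset_nonzero xM.
exists (transversal_repr x residues (add_coset x)).
  exact: repr_mem_transversal residues_transversal _ _ xP.
by rewrite (idealBC M_ideal) -mem_add_coset (repr_mem_pblock residues_transversal).
Qed.

Lemma card_residues : #|residues| = (#|quot_cosets M| - 1)%N.
Proof.
rewrite (card_transversal residues_transversal) (cardsD1 M (quot_cosets M)).
by rewrite ideal_in_quot_cosets add1n subn1.
Qed.

End Residues.

Lemma leq_card_quot_cosets (R : finComNzRingType) (M N : {set R}) :
  is_ideal M -> is_ideal N -> (#|N| <= #|M|)%N ->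
  (#|quot_cosets M| <= #|quot_cosets N|)%N.
Proof.
move=> MI NI NM; have M_gt0 : (0 < #|M|)%N by apply/card_gt0P; exists 0; apply: ideal0.
rewrite -(leq_pmul2r M_gt0) -card_quot_cosets // (card_quot_cosets NI).
exact: leq_mul.
Qed.

Lemma card_clique_le (R : finComNzRingType) (S : {set R}) k :
  is_clique S -> colorable R k -> (#|S| <= k)%N.
Proof.
case=> Sreg Sadj [c [c_lt c_proper]].
have c_uniq : uniq (map c (enum S)).
  rewrite map_inj_in_uniq ?enum_uniq // => x y; rewrite !mem_enum => xS yS cxy.
  apply: contraTeq (eqxx (c x)) => xy; rewrite [X in _ != X]cxy.
  exact: c_proper (subsetP Sreg _ xS) (subsetP Sreg _ yS) (Sadj x y xS yS xy).
rewrite cardE -(size_map c) -(size_iota 0 k) uniq_leq_size // => _ /mapP[x xS ->].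
by rewrite mem_iota c_lt // (subsetP Sreg) // -mem_enum.
Qed.

Section Theorem20.
Variables (R : finComNzRingType) (m : {set R}).
Hypotheses (m_max : is_maximal_ideal m)
  (m_largest : forall N : {set R}, is_maximal_ideal N -> (#|N| <= #|m|)%N)
  (m_char2 : 2%:R \in m).
Implicit Types (a b : R) (N : {set R}).

Let m_ideal : is_ideal m. Proof. by case: m_max. Qed.

Local Notation A := (residues m).

Definition local_residue (a : R) (N : {set R}) : R :=
  if 2%:R \in N then set_embed A (residues N) a else 1.

Definition residue_lift (a : R) : R := crt_lift (local_residue a).

Lemma leq_card_residues N : is_maximal_ideal N -> (#|A| <= #|residues N|)%N.
Proof.
move=> Nmax; have [NI _ _] := Nmax.
rewrite !card_residues // leq_sub2r // leq_card_quot_cosets //.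
exact: m_largest.
Qed.

Lemma local_residue_notin a N :
  a \in A -> is_maximal_ideal N -> local_residue a N \notin N.
Proof.
move=> aA Nmax; have [NI N1 _] := Nmax; rewrite /local_residue.
case: ifP => // _; apply: residues_notin => //.
by apply: (set_embed_mem (leq_card_residues Nmax)).
Qed.

Lemma local_residueD_notin a b N : a \in A -> b \in A -> a != b ->
  is_maximal_ideal N -> local_residue a N + local_residue b N \notin N.
Proof.
move=> aA bA ab Nmax; have [NI N1 _] := Nmax; rewrite /local_residue.
case: ifP => [N2|/negbT //]; apply: ideal_char2_addr => //.
have AN := leq_card_residues Nmax.
apply: contra ab => /(residues_inj NI) eq_ab; apply/eqP/(set_embed_inj AN) => //.
by apply: eq_ab; apply: set_embed_mem.
Qed.

Lemma residue_lift_regular a : a \in A -> residue_lift a \in regulars R.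
Proof. by move=> aA; apply: crt_lift_regular => N; apply: local_residue_notin. Qed.

Lemma residue_liftD_regular a b : a \in A -> b \in A -> a != b ->
  residue_lift a + residue_lift b \in regulars R.
Proof.
move=> aA bA ab; rewrite /residue_lift -crt_liftD.
by apply: crt_lift_regular => N; apply: local_residueD_notin.
Qed.

Lemma residue_lift_sub a : a \in A -> residue_lift a - a \in m.
Proof.
move=> aA; have := crt_liftP (local_residue a) m_max.
by rewrite /local_residue m_char2 set_embed_id.
Qed.

Definition principal_units : {set R} := [set k in regulars R | k - 1 \in m].

Lemma principal_unit_regular k : k \in principal_units -> k \in regulars R.
Proof. by rewrite inE => /andP[]. Qed.

Lemma principal_units_clique : is_clique principal_units.
Proof.
split; first by apply/subsetP => k /principal_unit_regular.
move=> x y; rewrite !inE => /andP[_ x1] /andP[_ y1] xy.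
rewrite /reg_adj xy zero_divisorsE; apply: (maximal_nonregular m_max).
have -> : x + y = (x - 1) + (y - 1) + 2%:R by ring.
by apply: idealD => //; apply: idealD.
Qed.

Definition residue_of (u : R) : R := odflt 0 [pick a in A | u - a \in m].

Lemma residue_ofP u : u \in regulars R -> residue_of u \in A /\ u - residue_of u \in m.
Proof.
move=> u_reg; have um : u \notin m by apply: contraL u_reg; apply: maximal_nonregular.
have [a aA uam] := residues_cover m_ideal um.
by rewrite /residue_of; case: pickP => [b /andP[]|/(_ a)] //; rewrite aA uam.
Qed.

Definition unit_part (u : R) : R := u * reg_inv (residue_lift (residue_of u)).

Lemma unit_partP u : u \in regulars R ->
  unit_part u \in principal_units /\ residue_lift (residue_of u) * unit_part u = u.
Proof.
move=> u_reg; have [aA uam] := residue_ofP u_reg.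
rewrite /unit_part; set a := residue_of u in aA uam *; set h := residue_lift a.
have hh' := mulr_reg_inv (residue_lift_regular aA); rewrite -/h in hh'.
split; last by rewrite mulrCA hh' mulr1.
rewrite inE regularM ?reg_inv_regular ?residue_lift_regular //=.
have -> : u * reg_inv h - 1 = (u - h) * reg_inv h by rewrite mulrBl hh'.
apply: idealMr => //; have -> : u - h = (u - a) - (h - a) by ring.
by apply: idealB => //; rewrite /h residue_lift_sub.
Qed.

Lemma residue_lift_mulr_inj a b k l : a \in A -> b \in A ->
  k \in principal_units -> l \in principal_units ->
  residue_lift a * k = residue_lift b * l -> a = b /\ k = l.
Proof.
move=> aA bA; rewrite !inE => /andP[_ k1] /andP[_ l1] eq_hk.
have lift_mod c j : c \in A -> j - 1 \in m -> residue_lift c * j - c \in m.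
  move=> cA j1.
  have -> : residue_lift c * j - c = (residue_lift c - c) * j + c * (j - 1) by ring.
  apply: (idealD m_ideal); last exact: (idealMl m_ideal).
  by apply: (idealMr m_ideal); apply: residue_lift_sub.
have ab : a = b.
  apply: (residues_inj m_ideal) => //.
  have -> : a - b = (residue_lift b * l - b) - (residue_lift a * k - a) by rewrite -eq_hk; ring.
  by apply: idealB => //; apply: lift_mod.
split=> //; subst b.
have := congr1 ( *%R (reg_inv (residue_lift a))) eq_hk.
by rewrite !mulrA [reg_inv _ * _]mulrC mulr_reg_inv ?residue_lift_regular // !mul1r.
Qed.

Lemma card_regulars : #|regulars R| = (#|A| * #|principal_units|)%N.
Proof.
have -> : regulars R = [set residue_lift p.1 * p.2 | p in setX A principal_units].
  apply/setP => u; apply/idP/imsetP => [u_reg|[[a k] /setXP[aA kK] ->]].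
    have [aA _] := residue_ofP u_reg; have [kK hk] := unit_partP u_reg.
    by exists (residue_of u, unit_part u); [apply/setXP | rewrite hk].
  by apply: regularM; [apply: residue_lift_regular | apply: principal_unit_regular].
rewrite card_in_imset ?cardsX // => -[a k] [b l] /setXP[aA kK] /setXP[bA lK] /= eq_hk.
by have [-> ->] := residue_lift_mulr_inj aA bA kK lK eq_hk.
Qed.

Definition colour (u : R) : nat := index (unit_part u) (enum principal_units).

Lemma colour_proper : proper_coloring #|principal_units| colour.
Proof.
split=> [u u_reg|x y x_reg y_reg /andP[xy xy_zd]].
  by rewrite /colour cardE index_mem mem_enum; case: (unit_partP u_reg).
apply/eqP => colour_xy.
have [kx hx] := unit_partP x_reg; have [ky hy] := unit_partP y_reg.
have eq_k : unit_part x = unit_part y.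
  by move: colour_xy; apply: (index_inj 0); rewrite mem_enum.
have [eq_a|neq_a] := eqVneq (residue_of x) (residue_of y).
  by move/eqP: xy; apply; rewrite -hx -hy eq_a eq_k.
move: xy_zd; rewrite zero_divisorsE -hx -hy eq_k -mulrDl => /negP; apply.
apply: regularM; last exact: principal_unit_regular.
by apply: residue_liftD_regular; rewrite // ?(residue_ofP x_reg).1 ?(residue_ofP y_reg).1.
Qed.

End Theorem20.

Unset Implicit Arguments.

Theorem theorem20 (R : finComNzRingType) (m : {set R}) :
  is_maximal_ideal m ->
  (forall m' : {set R}, is_maximal_ideal m' -> (#|m'| <= #|m|)%N) ->
  quot_char m 2 ->
  let q := #|quot_cosets m| in
  let n := (#|regulars R| %/ (q - 1))%N in
  #|regulars R| = (n * (q - 1))%N /\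
  is_chromatic_number R n /\ is_clique_number R n.
Proof.
move=> m_max m_largest [_ [m_char2 _]] q n.
have [m_ideal m1 _] := m_max.
have [a a_res _] := residues_cover m_ideal m1.
have res_gt0 : (0 < #|residues m|)%N by apply/card_gt0P; exists a.
have res_card : #|residues m| = (q - 1)%N by apply: card_residues.
have reg_card := card_regulars m_max m_largest m_char2.
have -> : n = #|principal_units m| by rewrite /n reg_card res_card mulKn // -res_card.
have K_clique := principal_units_clique m_max m_char2.
have K_colourable : colorable R #|principal_units m|.
  by exists (colour m); apply: colour_proper.
rewrite reg_card res_card mulnC; split=> //; split; split.
- exact: K_colourable.
- by move=> k; apply: card_clique_le K_clique.
- by exists (principal_units m).
- by move=> S S_clique; apply: card_clique_le S_clique K_colourable.
Qed.
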